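(* For each $n\in\mathbb{N}$ let $Y_n\colon\mathbb{I}\to\mathbb{Z}$ be a function such that for every $x\in\mathbb{I}$: (i) $Y_n(x)$ is odd; (ii) if $n=1$, $Y_1(x)\le d_1(x)<Y_1(x)+2$; (iii) if $n\ge2$ and $\epsilon_n(x)=\epsilon_{n-1}(x)$, then $Y_n(x)\le\frac{d_n(x)}{d_{n-1}(x)-1}<Y_n(x)+2$; (iv) if $n\ge2$ and $\epsilon_n(x)=-\epsilon_{n-1}(x)$, then $Y_n(x)\le\frac{d_n(x)}{d_{n-1}(x)+1}<Y_n(x)+2$. Then: (1) $\mathcal{L}(Y_n\ge 2k-1)=\frac{1}{2k-1}$ for all $n,k\in\mathbb{N}$; (2) $\frac{1}{t+2}<\mathcal{L}(Y_n\ge t)\le\frac1t$ for all $n\in\mathbb{N}$ and $t>0$; (3) $\{Y_n\}_{n\ge1}$ is a sequence of independent, identically distributed random variables (with respect to $\mathcal{L}$).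
   Context: $\mathcal{L}$ is Lebesgue measure, $\mathbb{I}=(0,1)\setminus\mathbb{Q}$. Define $T\colon[0,1)\to[0,1)$ by: for $k\in\mathbb{N}$, $Tx=\lceil 1/x\rceil x-1$ if $x\in(\frac{1}{2k},\frac{1}{2k-1})$; $Tx=1-\lfloor 1/x\rfloor x$ if $x\in(\frac{1}{2k+1},\frac{1}{2k})$; $Tx=0$ if $x\in\{0\}\cup\{1/n\colon n\ge 2\}$. For $x\in(0,1)$ define $d_1(x)=\lceil 1/x\rceil$, $s_1(x)=1$ if $x\in[\frac{1}{2k},\frac{1}{2k-1})$ for some $k$, and $d_1(x)=\lfloor 1/x\rfloor$, $s_1(x)=-1$ if $x\in[\frac{1}{2k+1},\frac{1}{2k})$ for some $k$; $d_{n+1}(x)=d_1(T^nx)$, $s_{n+1}(x)=s_1(T^nx)$, $\epsilon_1(x)=1$, $\epsilon_{n+1}(x)=\prod_{k=1}^ns_k(x)$. *)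

From HB Require Import structures.
From mathcomp Require Import all_boot all_order all_algebra.
From mathcomp Require Import all_classical all_reals all_analysis.
Set Implicit Arguments. Unset Strict Implicit. Unset Printing Implicit Defensive.
Import Order.TTheory GRing.Theory Num.Theory.
Local Open Scope classical_set_scope.
Local Open Scope ring_scope.

Section Defs.
Variable R : realType.

Definition Irr : set R :=
  [set x | 0 < x < 1 /\ ~ (exists q : rat, x = ratr q)].

(* the map T on [0,1) (values outside [0,1) are irrelevant) *)
Definition Tmap (x : R) : R :=
  if `[< exists k : nat, (1 <= k)%N /\
        (2 * k%:R)^-1 < x < (2 * k%:R - 1)^-1 >]
  then (Num.ceil (x^-1))%:~R * x - 1
  else if `[< exists k : nat, (1 <= k)%N /\
        (2 * k%:R + 1)^-1 < x < (2 * k%:R)^-1 >]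
  then 1 - (Num.floor (x^-1))%:~R * x
  else 0.

Definition inA (x : R) : Prop :=
  exists k : nat, (1 <= k)%N /\ (2 * k%:R)^-1 <= x < (2 * k%:R - 1)^-1.

Definition d1 (x : R) : int :=
  if `[< inA x >] then Num.ceil (x^-1) else Num.floor (x^-1).

Definition s1 (x : R) : int := if `[< inA x >] then 1 else -1.

Definition dig (n : nat) (x : R) : int := d1 (iter n.-1 Tmap x).
Definition sgn (n : nat) (x : R) : int := s1 (iter n.-1 Tmap x).

Definition eps (n : nat) (x : R) : int := \prod_(1 <= k < n) sgn k x.

Definition between2 (y : int) (q : R) : Prop := y%:~R <= q < y%:~R + 2.

Definition Yhyp (Y : nat -> R -> int) : Prop :=
  forall (n : nat) (x : R), (1 <= n)%N -> Irr x ->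
    [/\ odd (absz (Y n x)),
        n = 1%N -> between2 (Y 1%N x) (dig 1 x)%:~R,
        (2 <= n)%N -> eps n x = eps n.-1 x ->
          between2 (Y n x) ((dig n x)%:~R / ((dig n.-1 x)%:~R - 1))
      & (2 <= n)%N -> eps n x = - eps n.-1 x ->
          between2 (Y n x) ((dig n x)%:~R / ((dig n.-1 x)%:~R + 1))].

Local Open Scope ereal_scope.

Definition iid_Irr (Y : nat -> R -> int) : Prop :=
  [/\ (forall (n : nat) (A : set int), (1 <= n)%N ->
         measurable (Irr `&` Y n @^-1` A)),
      (forall (n m : nat) (A : set int), (1 <= n)%N -> (1 <= m)%N ->
         lebesgue_measure (Irr `&` Y n @^-1` A)
         = lebesgue_measure (Irr `&` Y m @^-1` A))
    & (forall (s : seq nat) (A : nat -> set int),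
         uniq s -> all (fun n => 1 <= n)%N s ->
         lebesgue_measure (Irr `&` \bigcap_(i in [set` s]) Y i @^-1` A i)
         = \prod_(i <- s) lebesgue_measure (Irr `&` Y i @^-1` A i))].

End Defs.

From HB Require Import structures.
From mathcomp Require Import all_boot all_order all_algebra.
From mathcomp Require Import all_classical all_reals all_analysis.
From mathcomp Require Import zify ring lra.
Import Order.TTheory GRing.Theory Num.Theory.
Local Open Scope classical_set_scope.
Local Open Scope ring_scope.
Set Implicit Arguments. Unset Strict Implicit. Unset Printing Implicit Defensive.

(* Write [y_n = T^n x] ([Torbit n x]) and let [m_n] ([odd_scale n x]) be the
   odd number with [m_0 = 1] and [m_(n+1)] the odd one of [floor (1/y_n)] and
   [floor (1/y_n) + 1].  Hypotheses (i)-(iv) force [Y_(n+1)] to be the odd [c]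
   with [c <= 1/(m_n y_n) < c + 2].  On the set where [Y_1, ..., Y_n] and [m_n]
   are prescribed, [y_n] is uniformly distributed on [(0, 1/m_n)]: this is
   preserved by one step of [T], because each branch of [T] is affine and onto
   [(0, 1)], and on a branch [floor (1/y_n)] is constant, which fixes [m_(n+1)]
   and [Y_(n+1)].  Hence [m_n y_n] is uniform on [(0, 1)] independently of
   [Y_1, ..., Y_n], and [Y_(n+1) = 2j + 1] exactly when
   [1/(2j+3) < m_n y_n < 1/(2j+1)]. *)

Section InverseComparisons.
Variable R : numFieldType.
Implicit Types a y : R.

Lemma lt_invr_mul1 a y : 0 < y -> (a < y^-1) = (a * y < 1).
Proof. by move=> y0; rewrite -div1r ltr_pdivlMr. Qed.

Lemma le_invr_mul1 a y : 0 < y -> (a <= y^-1) = (a * y <= 1).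
Proof. by move=> y0; rewrite -div1r ler_pdivlMr. Qed.

Lemma invr_lt_mul1 a y : 0 < y -> (y^-1 < a) = (1 < a * y).
Proof. by move=> y0; rewrite -div1r ltr_pdivrMr. Qed.

Lemma invr_le_mul1 a y : 0 < y -> (y^-1 <= a) = (1 <= a * y).
Proof. by move=> y0; rewrite -div1r ler_pdivrMr. Qed.

End InverseComparisons.

Section OddFloor.
Variable R : realType.
Implicit Types q y : R.

Definition odd_floor q : int := 2 * Num.floor ((q - 1) / 2) + 1.

Lemma odd_floor_odd q : odd `|odd_floor q|%N.
Proof. by rewrite /odd_floor; lia. Qed.

Lemma between2_odd_floor q : between2 (odd_floor q) q.
Proof.
have /andP [lo hi] := floor_itv ((q - 1) / 2).
rewrite /between2 /odd_floor !intrD intrM.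
rewrite intrD in hi.
by apply/andP; split; rewrite -[2%:~R]/(2 : R) -[1%:~R]/(1 : R) in hi *; lra.
Qed.

Lemma odd_floor_unique (c : int) q : odd `|c|%N -> between2 c q -> c = odd_floor q.
Proof.
move=> oc /andP [c_le lt_c]; have /andP [lo hi] := between2_odd_floor q.
have := odd_floor_odd q.
have : (c%:~R : R) < (odd_floor q + 2)%:~R by rewrite intrD (le_lt_trans c_le).
have : ((odd_floor q)%:~R : R) < (c + 2)%:~R by rewrite intrD (le_lt_trans lo).
by rewrite !ltr_int; lia.
Qed.

Lemma odd_floor_succ_div (K M : nat) : odd K -> odd M ->
  odd_floor (K.+1%:R / M%:R) = odd_floor (K%:R / M%:R).
Proof.
move=> oK oM; have M0 : (0 < M)%N by case: M oM.
have M0r : (0 : R) < M%:R by rewrite ltr0n.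
have /andP [c_le lt_c] := between2_odd_floor (K.+1%:R / M%:R).
have oc := odd_floor_odd (K.+1%:R / M%:R).
set c := odd_floor _ in c_le lt_c oc *.
rewrite ler_pdivlMr // in c_le; rewrite ltr_pdivrMr // in lt_c.
have cM_le : c * M%:Z <= K.+1%:Z by rewrite -(ler_int R) intrM -!pmulrn.
have lt_cM : K.+1%:Z < (c + 2) * M%:Z by rewrite -(ltr_int R) intrM intrD -!pmulrn.
(* [c M] is odd and [K + 1] is even. *)
have ocM : odd `|(c * M%:Z)%R|%N by rewrite abszM oddM oc.
have cM_leK : c * M%:Z <= K%:Z by lia.
have ltK_cM : K%:Z < (c + 2) * M%:Z by lia.
apply: odd_floor_unique oc _; apply/andP; split.
  by rewrite ler_pdivlMr // !pmulrn -intrM ler_int.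
by rewrite ltr_pdivrMr // !pmulrn -intrD -intrM ltr_int.
Qed.

Lemma odd_floor_invr_mul (p M : nat) y : 0 < y -> (0 < M)%N ->
  p%:R * y <= 1 -> 1 < p.+1%:R * y ->
  odd_floor ((M%:R * y)^-1) = odd_floor (p%:R / M%:R).
Proof.
move=> y0 M0 py_le lt_py.
have /andP [c_le lt_c] := between2_odd_floor (p%:R / M%:R).
have oc := odd_floor_odd (p%:R / M%:R).
set c := odd_floor _ in c_le lt_c oc *.
have M0r : (0 : R) < M%:R by rewrite ltr0n.
rewrite ler_pdivlMr // in c_le; rewrite ltr_pdivrMr // in lt_c.
have lt_p : p%:Z < (c + 2) * M%:Z by rewrite -(ltr_int R) intrM intrD -!pmulrn.
have le_p : p.+1%:Z <= (c + 2) * M%:Z by lia.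
rewrite -(ler_int R) intrM intrD -!pmulrn in le_p.
have My0 : 0 < M%:R * y by rewrite mulr_gt0.
symmetry; apply: odd_floor_unique oc _; apply/andP; split.
  by rewrite le_invr_mul1 //; nra.
by rewrite invr_lt_mul1 //; nra.
Qed.

End OddFloor.

Section Digits.
Variable R : realType.
Implicit Types y : R.

Lemma IrrP y : Irr y -> [/\ 0 < y, y < 1 & ~ exists q : rat, y = ratr q].
Proof. by case=> /andP []. Qed.

Lemma irrational_affine y (a b : rat) : a != 0 ->
  (~ exists q : rat, y = ratr q) -> ~ exists q : rat, ratr a * y + ratr b = ratr q.
Proof.
move=> a0 ny [q hq]; apply: ny; exists ((q - b) / a).
by rewrite fmorph_div rmorphB /= -hq addrK mulrC mulKf // fmorph_eq0.
Qed.

Definition floorV y : nat := `|Num.floor y^-1|%N.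

Lemma floorV_bounds y : Irr y ->
  [/\ (0 < floorV y)%N, (floorV y)%:R * y < 1 & 1 < (floorV y).+1%:R * y].
Proof.
case/IrrP=> y0 y1 ny.
have /andP [lo hi] := floor_itv (y^-1).
set f := Num.floor y^-1 in lo hi *.
have f1 : 1 <= f.
  by rewrite -[1]/(1%:Z) floor_ge_int /f -[1%:~R]/(1 : R) le_invr_mul1 // mul1r ltW.
have ef : (floorV y)%:R = f%:~R :> R.
  by rewrite /floorV -/f natr_absz ger0_norm // (le_trans _ f1).
have fne : f%:~R != y^-1 :> R.
  apply/eqP => e; apply: ny; exists (f%:~R^-1).
  by rewrite fmorphV rmorph_int e invrK.
have lt_f : f%:~R < y^-1 :> R by rewrite lt_neqAle fne lo.
split.
- by rewrite /floorV -/f; lia.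
- by rewrite ef -lt_invr_mul1.
- by rewrite -natr1 ef -invr_lt_mul1 // -[1]/(1%:~R : R) -intrD.
Qed.

Lemma floorV_unique (K : nat) y : 0 < y -> K%:R * y < 1 -> 1 < K.+1%:R * y ->
  floorV y = K.
Proof.
move=> y0 lt_Ky lt_K1y.
rewrite /floorV (_ : Num.floor y^-1 = K%:Z) //.
apply: floor_def; have -> : K%:Z + 1 = K.+1%:Z by lia.
by rewrite -!pmulrn le_invr_mul1 // invr_lt_mul1 // lt_K1y ltW.
Qed.

Lemma Tmap_odd_branch y (K : nat) : 0 < y -> K%:R * y < 1 -> 1 < K.+1%:R * y ->
  odd K -> [/\ Tmap y = K.+1%:R * y - 1, d1 y = K.+1%:Z & s1 y = 1].
Proof.
move=> y0 lt_Ky lt_K1y oK.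
have [k ek] : exists k, K.+1 = (2 * k)%N by exists (K.+1 %/ 2)%N; lia.
have k1 : (1 <= k)%N by lia.
have e2k : 2 * k%:R = K.+1%:R :> R by rewrite ek natrM.
have e2k1 : 2 * k%:R - 1 = K%:R :> R by rewrite e2k -addn1 natrD addrK.
have K0 : (0 < K)%N by case: K oK {lt_Ky lt_K1y ek e2k e2k1}.
have Ky : (K.+1%:R)^-1 <= y < (K%:R)^-1.
  rewrite invr_le_mul1 ?lt_invr_mul1 ?ltr0n // mulrC (mulrC y).
  by rewrite lt_Ky ltW.
have inAy : inA y by exists k; rewrite e2k1 e2k.
have ceilE : Num.ceil y^-1 = K.+1%:Z.
  apply: ceil_def; have -> : K.+1%:Z - 1 = K%:Z by lia.
  by rewrite -!pmulrn lt_invr_mul1 // invr_le_mul1 // lt_Ky ltW.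
rewrite /d1 /s1 asboolT // ceilE; split=> //.
rewrite /Tmap asboolT; first by rewrite ceilE -pmulrn.
exists k; split=> //; rewrite e2k1 e2k.
by rewrite invr_lt_mul1 ?ltr0n // lt_invr_mul1 ?ltr0n // ![y * _]mulrC lt_Ky lt_K1y.
Qed.

Lemma Tmap_even_branch y (K : nat) : 0 < y -> K%:R * y < 1 -> 1 < K.+1%:R * y ->
  (0 < K)%N -> ~~ odd K -> [/\ Tmap y = 1 - K%:R * y, d1 y = K%:Z & s1 y = -1].
Proof.
move=> y0 lt_Ky lt_K1y K0 eK.
have [k ek] : exists k, K = (2 * k)%N by exists (K %/ 2)%N; lia.
have k1 : (1 <= k)%N by lia.
have e2k : 2 * k%:R = K%:R :> R by rewrite ek natrM.
have notA : forall k' : nat, (1 <= k')%N -> (2 * k'%:R)^-1 <= y ->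
    ~ (y < (2 * k'%:R - 1)^-1).
  move=> k' k'1 lo hi.
  have e' : 2 * k'%:R = (2 * k')%:R :> R by rewrite natrM.
  have e1 : 2 * k'%:R - 1 = (2 * k').-1%:R :> R.
    by rewrite e' -[in LHS](@prednK (2 * k')) ?muln_gt0 // -addn1 natrD addrK.
  rewrite e1 lt_invr_mul1 ?ltr0n 1?mulrC in hi; last by lia.
  rewrite e' invr_le_mul1 ?ltr0n 1?mulrC in lo; last by lia.
  have : (K < 2 * k')%N by rewrite -(ltr_nat R) -(ltr_pM2r y0) (lt_le_trans lt_Ky).
  have : ((2 * k').-1 < K.+1)%N by rewrite -(ltr_nat R) -(ltr_pM2r y0) (lt_trans hi).
  by move: eK; rewrite ek; lia.
have notAy : ~ inA y by case=> k' [k'1 /andP [lo hi]]; apply: (notA k').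
have floorE : Num.floor y^-1 = K%:Z.
  apply: floor_def; have -> : K%:Z + 1 = K.+1%:Z by lia.
  by rewrite -!pmulrn le_invr_mul1 // invr_lt_mul1 // lt_K1y ltW.
rewrite /d1 /s1 asboolF // floorE; split=> //.
rewrite /Tmap asboolF; last first.
  by case=> k' [k'1 /andP [lo hi]]; apply: (notA k' k'1 (ltW lo)).
rewrite asboolT; first by rewrite floorE -pmulrn.
exists k; split=> //; rewrite e2k natr1.
by rewrite invr_lt_mul1 ?ltr0n // lt_invr_mul1 ?ltr0n // ![y * _]mulrC lt_Ky lt_K1y.
Qed.

Lemma Tmap_digit y : Irr y -> let K := floorV y in
  [/\ Tmap y = (if odd K then K.+1%:R * y - 1 else 1 - K%:R * y),
      d1 y = (if odd K then K.+1%:Z else K%:Z) &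
      s1 y = (if odd K then 1 else -1)].
Proof.
move=> hy K; have [K0 lt_Ky lt_K1y] := floorV_bounds hy.
have [y0 _ _] := IrrP hy.
case: ifP => oK; first by have [-> -> ->] := Tmap_odd_branch y0 lt_Ky lt_K1y oK.
by have [-> -> ->] := Tmap_even_branch y0 lt_Ky lt_K1y K0 (negbT oK).
Qed.

Lemma Irr_Tmap y : Irr y -> Irr (Tmap y).
Proof.
move=> hy; have [K0 lt_Ky lt_K1y] := floorV_bounds hy.
have [[-> _ _] [y0 _ ny]] := (Tmap_digit hy, IrrP hy).
move: lt_Ky lt_K1y; set K := floorV y => lt_Ky lt_K1y.
have K1 : (1 : R) <= K%:R by rewrite ler1n.
rewrite -natr1 in lt_K1y *.
case: ifP => _.
  split; first by apply/andP; split; nra.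
  have K1n0 : (K.+1%:Q) != 0 by rewrite pnatr_eq0.
  move: (irrational_affine (b := -1) K1n0 ny); apply: contra_not => -[q hq]; exists q.
  by rewrite rmorph_nat rmorphN rmorph1 -hq natr1.
split; first by apply/andP; split; nra.
have Kn0 : (- K%:Q) != 0 by rewrite oppr_eq0 pnatr_eq0 -lt0n.
move: (irrational_affine (b := 1) Kn0 ny); apply: contra_not => -[q hq]; exists q.
by rewrite rmorphN rmorph_nat rmorph1 -hq mulNr addrC.
Qed.

End Digits.

Section Orbit.
Variable R : realType.

Definition Torbit n (x : R) : R := iter n (@Tmap R) x.

(* The denominator [d_n - 1] or [d_n + 1] of hypotheses (iii)/(iv) for [Y_(n+1)]. *)
Definition odd_scale n (x : R) : nat :=
  if n is n'.+1 then
    let K := floorV (Torbit n' x) in if odd K then K else K.+1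
  else 1.

Lemma TorbitS n x : Torbit n.+1 x = Tmap (Torbit n x).
Proof. by []. Qed.

Lemma Torbit_odd_scale_inv n x : Irr x ->
  [/\ Irr (Torbit n x), (0 < odd_scale n x)%N, (odd_scale n x)%:R * Torbit n x < 1
    & odd (odd_scale n x)].
Proof.
move=> hx; elim: n => [|n [hy _ _ _]]; first by have [? ? ?] := IrrP hx; rewrite mul1r.
have [K0 lt_Ky lt_K1y] := floorV_bounds hy; have [y0 _ _] := IrrP hy.
have [eT _ _] := Tmap_digit hy.
rewrite TorbitS /odd_scale; split; first exact: Irr_Tmap.
- by case: ifP.
- have K1 : (1 : R) <= (floorV (Torbit n x))%:R by rewrite ler1n.
  by rewrite eT; case: ifP => oK; rewrite -?natr1 in lt_K1y *; nra.
- by case: ifP => // oK /=; rewrite oK.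
Qed.

Lemma odd_scale_le_floorV n x : Irr x -> (odd_scale n x <= floorV (Torbit n x))%N.
Proof.
move=> hx; have [hy _ lt_My _] := Torbit_odd_scale_inv n hx.
have [_ _ lt_K1y] := floorV_bounds hy; have [y0 _ _] := IrrP hy.
by rewrite -ltnS -(ltr_nat R) -(ltr_pM2r y0) (lt_trans lt_My).
Qed.

End Orbit.

Section IrrationalIntervals.
Variable R : realType.
Local Notation L := (@lebesgue_measure R).

Lemma countable_ratr : countable (range (@ratr R)).
Proof. exact: (sub_countable (card_image_le _ _) (countableP _)). Qed.

Lemma measurable_ratr : measurable (range (@ratr R)).
Proof. by apply: countable_measurable; [exact: measurable_set1 | exact: countable_ratr]. Qed.

Lemma Irr_itvE (c d : R) : 0 <= c -> d <= 1 ->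
  @Irr R `&` [set x | c < x < d] = `]c, d[ `\` range (@ratr R).
Proof.
move=> c0 d1; apply/seteqP; split => x /=.
  case=> -[_ nq] /andP [cx xd]; split; first by rewrite in_itv /= cx xd.
  by case=> q _ e; apply: nq; exists q.
rewrite in_itv /= => -[/andP [cx xd] nq]; split; last by rewrite cx xd.
split; first by rewrite (le_lt_trans c0 cx) (lt_le_trans xd d1).
by case=> q e; apply: nq; exists q.
Qed.

Lemma measure_Irr_itv (c d : R) : 0 <= c -> c <= d -> d <= 1 ->
  measurable (@Irr R `&` [set x | c < x < d]) /\
  L (@Irr R `&` [set x | c < x < d]) = (d - c)%:E.
Proof.
move=> c0 cd d1; rewrite Irr_itvE //.
split; first by apply: measurableD; [exact: measurable_itv | exact: measurable_ratr].
have Litv : L `]c, d[ = (d - c)%:E.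
  rewrite lebesgue_measure_itv /= lte_fin.
  by case: ltgtP cd => // ->; rewrite subrr.
rewrite measureD //; last 2 first.
- exact: measurable_ratr.
- by move: Litv; rewrite /= => ->; rewrite ltry.
have Lrat : L (`]c, d[ `&` range (@ratr R)) = 0%E.
  exact/countable_lebesgue_measure0/(sub_countable _ countable_ratr)/subset_card_le.
by move: Litv Lrat; rewrite /= => -> ->; rewrite sube0.
Qed.

Lemma measure_Irr : measurable (@Irr R) /\ L (@Irr R) = 1%E.
Proof.
have [mI LI] := measure_Irr_itv (lexx 0) ler01 (lexx 1).
suff -> : @Irr R = @Irr R `&` [set x | 0 < x < 1] by rewrite LI subr0.
by apply/seteqP; split => x; [move=> hx; split => //; case: hx | case].
Qed.

End IrrationalIntervals.

Lemma big_ord_mem_succ (T : Type) (idx : T) (op : Monoid.com_law idx)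
    (s : seq nat) (N : nat) (G : nat -> T) :
  uniq s -> all (leq 1) s -> (forall i, i \in s -> i <= N)%N ->
  \big[op/idx]_(i < N) (if i.+1 \in s then G i.+1 else idx) =
  \big[op/idx]_(i <- s) G i.
Proof.
move=> us s_pos le_N.
rewrite -(big_mkord xpredT (fun i => if i.+1 \in s then G i.+1 else idx)).
rewrite -big_mkcond /= -(big_add1 idx op 0 N.+1 (fun i => i \in s) G) -big_filter.
apply: perm_big; apply: uniq_perm; first by rewrite filter_uniq ?iota_uniq.
  exact: us.
move=> i; rewrite mem_filter mem_index_iota; case si: (i \in s) => //=.
by have := allP s_pos i si; have := le_N i si; lia.
Qed.

Section DigitProcess.
Variable R : realType.
Variable Y : nat -> R -> int.
Hypothesis HY : Yhyp Y.
Local Notation L := (@lebesgue_measure R).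
Implicit Types (n : nat) (x a b c d : R) (B : nat -> set int).

Lemma eps_succ n x : eps n.+2 x = eps n.+1 x * s1 (Torbit n x).
Proof. by rewrite /eps big_nat_recr. Qed.

Lemma Y_between2_digit n x : Irr x ->
  between2 (Y n.+1 x) ((d1 (Torbit n x))%:~R / (odd_scale n x)%:R : R).
Proof.
move=> hx; case: n => [|n]; first by have [_ Y1 _ _] := HY (ltn0Sn 0) hx; rewrite divr1; apply: Y1.
have [_ _ Y_same Y_flip] := HY (ltn0Sn n.+1) hx.
have [hy _ _ _] := Torbit_odd_scale_inv n hx; have [_ ed es] := Tmap_digit hy.
move: Y_same Y_flip (eps_succ n x); rewrite /dig /= -/(Torbit n x) -/(Torbit n.+1 x) es ed.
case: ifP => _ Y_same Y_flip; rewrite ?mulr1 ?mulrN1 => epsE.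
  by have := Y_same isT epsE; rewrite -[X in X - 1]pmulrn -natr1 addrK.
by have := Y_flip isT epsE; rewrite -pmulrn natr1.
Qed.

Lemma Y_succ_floorV n x : Irr x ->
  Y n.+1 x = odd_floor ((floorV (Torbit n x))%:R / (odd_scale n x)%:R : R).
Proof.
move=> hx; have [oY _ _ _] := HY (ltn0Sn n) hx.
have [hy _ _ oM] := Torbit_odd_scale_inv n hx; have [_ ed _] := Tmap_digit hy.
rewrite (odd_floor_unique oY (Y_between2_digit n hx)) ed /odd_scale.
by case: ifP => oK; rewrite -pmulrn ?odd_floor_succ_div.
Qed.

Lemma Y_succ_scaled n x : Irr x ->
  Y n.+1 x = odd_floor (((odd_scale n x)%:R * Torbit n x)^-1).
Proof.
move=> hx; have [hy M0 _ _] := Torbit_odd_scale_inv n hx.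
have [_ lt_Ky lt_K1y] := floorV_bounds hy; have [y0 _ _] := IrrP hy.
by rewrite Y_succ_floorV // (odd_floor_invr_mul y0 M0 (ltW lt_Ky) lt_K1y).
Qed.

Definition history n (B : nat -> set int) (x : R) :=
  forall i, (i < n)%N -> B i (Y i.+1 x).

Lemma history_succ n B x : history n.+1 B x <-> history n B x /\ B n (Y n.+1 x).
Proof.
split=> [h | [h hB] i]; first by split=> [i lt_in|]; apply: h; rewrite // ltnS ltnW.
by rewrite ltnS leq_eqVlt => /orP [/eqP -> | /h].
Qed.

Definition cylinder n B (M : nat) (c d : R) : set R :=
  @Irr R `&` [set x | [/\ history n B x, odd_scale n x = M & c < Torbit n x < d]].

Lemma cylinder_succP n B N c d x : Irr x ->
  cylinder n.+1 B N c d x <->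
  [/\ history n B x, B n (odd_floor ((floorV (Torbit n x))%:R / (odd_scale n x)%:R : R)),
      odd_scale n.+1 x = N & c < Tmap (Torbit n x) < d].
Proof.
move=> hx; rewrite /cylinder -(Y_succ_floorV n hx).
split=> [[_ [/history_succ [hh hB] hN hcd]] | [hh hB hN hcd]]; first by split.
by split=> //; split=> //; apply/history_succ.
Qed.

(* A point of [cylinder n.+1 B N c d] comes through the branch of [Tmap] where
   [floorV] is [N] ([Tmap y = (N + 1) y - 1]) or [N - 1] ([Tmap y = 1 - (N - 1) y]);
   [M] is its [odd_scale] at time [n]. *)
Definition odd_branch_ok n B (N M : nat) :=
  [/\ odd N, (0 < M)%N, (M <= N)%N & B n (odd_floor (N%:R / M%:R : R))].

Definition even_branch_ok n B (N M : nat) :=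
  [/\ odd N, (0 < M)%N, (M < N)%N & B n (odd_floor (N.-1%:R / M%:R : R))].

Definition odd_branch n B N c d M : set R :=
  if `[< odd_branch_ok n B N M >]
  then cylinder n B M ((1 + c) / N.+1%:R) ((1 + d) / N.+1%:R) else set0.

Definition even_branch n B N c d M : set R :=
  if `[< even_branch_ok n B N M >]
  then cylinder n B M ((1 - d) / N.-1%:R) ((1 - c) / N.-1%:R) else set0.

Lemma cylinder_succ_sub n B N c d :
  cylinder n.+1 B N c d `<=`
  \bigcup_M (odd_branch n B N c d M `|` even_branch n B N c d M).
Proof.
move=> x hxc; have hx : Irr x by case: hxc.
have [hh hB hN /andP [lt_c lt_d]] := (@cylinder_succP n B N c d x hx).1 hxc.
have [hy M0 _ _] := Torbit_odd_scale_inv n hx; have MK := odd_scale_le_floorV n hx.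
have [K0 _ _] := floorV_bounds hy; have [eT _ _] := Tmap_digit hy.
exists (odd_scale n x) => //; move: hB hN lt_c lt_d MK K0; rewrite eT /=.
set K := floorV (Torbit n x); set M := odd_scale n x.
case oK : (odd K) => /= hB <- lt_c lt_d MK K0.
- left; rewrite /odd_branch asboolT; last by split.
  split=> //; split=> //.
  by rewrite ltr_pdivrMr ?ltr0n // ltr_pdivlMr ?ltr0n //; apply/andP; split; lra.
- right; rewrite /even_branch asboolT /=; last by split; rewrite /= ?oK.
  split=> //; split=> //.
  by rewrite ltr_pdivrMr ?ltr0n // ltr_pdivlMr ?ltr0n //; apply/andP; split; lra.
Qed.

Lemma odd_branch_floorV n B N c d M x : 0 <= c -> d <= N%:R^-1 ->
  odd_branch n B N c d M x -> floorV (Torbit n x) = N.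
Proof.
move=> c0 dN; rewrite /odd_branch; case: asboolP => // -[oN _ _ _].
move=> [hx [_ _ /andP [lo hi]]].
have [hy _ _ _] := Torbit_odd_scale_inv n hx; have [y0 _ _] := IrrP hy.
have N0 : (0 : R) < N%:R by rewrite ltr0n; case: N oN {dN lo hi}.
rewrite le_invr_mul1 // in dN.
rewrite ltr_pdivrMr ?ltr0n // in lo; rewrite ltr_pdivlMr ?ltr0n // in hi.
rewrite -natr1 in lo hi *; apply: floorV_unique => //; [nra | lra].
Qed.

Lemma even_branch_floorV n B N c d M x : 0 <= c -> d <= N%:R^-1 ->
  even_branch n B N c d M x -> floorV (Torbit n x) = N.-1.
Proof.
move=> c0 dN; rewrite /even_branch; case: asboolP => // -[_ M0 MN _].
move=> [hx [_ _ /andP [lo hi]]].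
have [hy _ _ _] := Torbit_odd_scale_inv n hx; have [y0 _ _] := IrrP hy.
have N1 : (0 < N.-1)%N by lia.
have N1r : (0 : R) < N.-1%:R by rewrite ltr0n.
rewrite -(prednK (ltnW (leq_ltn_trans M0 MN))) le_invr_mul1 ?ltr0n // in dN.
rewrite ltr_pdivrMr // in lo; rewrite ltr_pdivlMr // in hi.
rewrite -natr1 in dN *; apply: floorV_unique => //; [lra | nra].
Qed.

Lemma odd_branch_sub n B N c d M : 0 <= c -> d <= N%:R^-1 ->
  odd_branch n B N c d M `<=` cylinder n.+1 B N c d.
Proof.
move=> c0 dN x hxM; have eK := odd_branch_floorV c0 dN hxM.
move: hxM; rewrite /odd_branch; case: asboolP => // -[oN _ _ hB].
move=> [hx [hh hM /andP [lo hi]]]; apply/(@cylinder_succP n B N c d x hx).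
have [hy _ _ _] := Torbit_odd_scale_inv n hx; have [eT _ _] := Tmap_digit hy.
rewrite /= eT eK oN hM; split=> //.
rewrite ltr_pdivrMr ?ltr0n // in lo; rewrite ltr_pdivlMr ?ltr0n // in hi.
by apply/andP; split; lra.
Qed.

Lemma even_branch_sub n B N c d M : 0 <= c -> d <= N%:R^-1 ->
  even_branch n B N c d M `<=` cylinder n.+1 B N c d.
Proof.
move=> c0 dN x hxM; have eK := even_branch_floorV c0 dN hxM.
move: hxM; rewrite /even_branch; case: asboolP => // -[oN M0 MN hB].
move=> [hx [hh hM /andP [lo hi]]]; apply/(@cylinder_succP n B N c d x hx).
have [hy _ _ _] := Torbit_odd_scale_inv n hx; have [eT _ _] := Tmap_digit hy.
have N0 : (0 < N)%N by case: N oN {dN lo hi MN hB eK}.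
have eN : ~~ odd N.-1 by move: oN; rewrite -{1}(prednK N0).
have N1r : (0 : R) < N.-1%:R by rewrite ltr0n; lia.
rewrite /= eT eK (negbTE eN) prednK // hM; split=> //.
rewrite ltr_pdivrMr // in lo; rewrite ltr_pdivlMr // in hi.
by apply/andP; split; lra.
Qed.

Lemma cylinder_succE n B N c d : 0 <= c -> d <= N%:R^-1 ->
  cylinder n.+1 B N c d =
  \bigcup_M (odd_branch n B N c d M `|` even_branch n B N c d M).
Proof.
move=> c0 dN; apply/seteqP; split; first exact: cylinder_succ_sub.
by move=> x [M _ [/(odd_branch_sub c0 dN) | /(even_branch_sub c0 dN)]].
Qed.

Definition uniform_cylinder n := forall B (M : nat) c d,
  (0 < M)%N -> 0 <= c -> c <= d -> d <= M%:R^-1 ->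
  measurable (cylinder n B M c d) /\
  L (cylinder n B M c d) = ((M%:R * (d - c))%:E * L (cylinder n B M 0 M%:R^-1))%E.

Lemma uniform_cylinder0 : uniform_cylinder 0.
Proof.
move=> B M c d _ c0 cd; case: (eqVneq M 1%N) => [-> | M1] dM; last first.
  suff E c' d' : cylinder 0 B M c' d' = set0 by rewrite !E measure0 mule0.
  by apply/seteqP; split => x // [_ [_ eM _]]; rewrite -eM eqxx in M1.
have E c' d' : cylinder 0 B 1 c' d' = @Irr R `&` [set x | c' < x < d'].
  by apply/seteqP; split => x [hx hc]; [case: hc | split].
rewrite invr1 in dM; rewrite !E invr1.
have [mI LI] := measure_Irr_itv c0 cd dM.
have [_ LI1] := measure_Irr_itv (lexx (0 : R)) ler01 (lexx 1).
by rewrite LI LI1 subr0 mul1r mule1.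
Qed.

Lemma odd_branch_measure n B N c d M : uniform_cylinder n ->
  0 <= c -> c <= d -> d <= N%:R^-1 ->
  measurable (odd_branch n B N c d M) /\
  L (odd_branch n B N c d M) =
  (((d - c) * (if `[< odd_branch_ok n B N M >] then M%:R / N.+1%:R else 0))%:E
   * L (cylinder n B M 0 M%:R^-1))%E.
Proof.
move=> IH c0 cd dN; rewrite /odd_branch; case: asboolP => [[oN M0 MN _] | _]; last first.
  by rewrite measure0 mulr0 mul0e.
have N0r : (0 : R) < N%:R by rewrite ltr0n; case: N oN {dN MN}.
have M0r : (0 : R) < M%:R by rewrite ltr0n.
have MNr : (M%:R : R) <= N%:R by rewrite ler_nat.
have Md : M%:R * d <= 1.
  rewrite le_invr_mul1 // in dN; apply: le_trans dN.
  by rewrite mulrC ler_wpM2l // (le_trans c0 cd).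
have [||| mP ->] := IH B M ((1 + c) / N.+1%:R) ((1 + d) / N.+1%:R) M0.
- by rewrite divr_ge0 ?addr_ge0.
- by rewrite ler_pM2r ?invr_gt0 ?ltr0n // lerD2l.
- by rewrite le_invr_mul1 // mulrAC ler_pdivrMr ?ltr0n // mul1r -natr1; lra.
split=> //; congr (_ * _)%E; congr EFin; rewrite -mulrBl; field.
by rewrite addrC natr1 pnatr_eq0.
Qed.

Lemma even_branch_measure n B N c d M : uniform_cylinder n ->
  0 <= c -> c <= d -> d <= N%:R^-1 ->
  measurable (even_branch n B N c d M) /\
  L (even_branch n B N c d M) =
  (((d - c) * (if `[< even_branch_ok n B N M >] then M%:R / N.-1%:R else 0))%:E
   * L (cylinder n B M 0 M%:R^-1))%E.
Proof.
move=> IH c0 cd dN; rewrite /even_branch; case: asboolP => [[oN M0 MN _] | _]; last first.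
  by rewrite measure0 mulr0 mul0e.
have N0r : (0 : R) < N%:R by rewrite ltr0n; lia.
have M0r : (0 : R) < M%:R by rewrite ltr0n.
have N1r : (0 : R) < N.-1%:R by rewrite ltr0n; lia.
have MNr : (M%:R : R) <= N.-1%:R by rewrite ler_nat; lia.
have d1 : d <= 1 by apply: (le_trans dN); rewrite invf_le1 // ler1n; lia.
have [||| mP ->] := IH B M ((1 - d) / N.-1%:R) ((1 - c) / N.-1%:R) M0.
- by rewrite divr_ge0 ?subr_ge0.
- by rewrite ler_pM2r ?invr_gt0 // lerD2l lerN2.
- by rewrite le_invr_mul1 // mulrAC ler_pdivrMr // mul1r; nra.
split=> //; congr (_ * _)%E; congr EFin; rewrite -mulrBl; field.
exact: lt0r_neq0.
Qed.

Lemma odd_even_branch_disjoint n B N c d M : 0 <= c -> d <= N%:R^-1 ->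
  odd_branch n B N c d M `&` even_branch n B N c d M = set0.
Proof.
move=> c0 dN; apply/seteqP; split=> // x [xo xe].
have := odd_branch_floorV c0 dN xo; rewrite (even_branch_floorV c0 dN xe).
by move: xe; rewrite /even_branch; case: asboolP => // -[_ M0 MN _] _; lia.
Qed.

Definition branch_weight n B (N M : nat) : R :=
  (if `[< odd_branch_ok n B N M >] then M%:R / N.+1%:R else 0) +
  (if `[< even_branch_ok n B N M >] then M%:R / N.-1%:R else 0).

Lemma branches_measure n B N c d M : uniform_cylinder n ->
  0 <= c -> c <= d -> d <= N%:R^-1 ->
  measurable (odd_branch n B N c d M `|` even_branch n B N c d M) /\
  L (odd_branch n B N c d M `|` even_branch n B N c d M) =
  ((d - c)%:E * ((branch_weight n B N M)%:E * L (cylinder n B M 0 M%:R^-1)))%E.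
Proof.
move=> IH c0 cd dN.
have [mo Lo] := @odd_branch_measure n B N c d M IH c0 cd dN.
have [me Le] := @even_branch_measure n B N c d M IH c0 cd dN.
have dc0 : 0 <= d - c by rewrite subr_ge0.
split; first exact: measurableU.
have -> : L (odd_branch n B N c d M `|` even_branch n B N c d M) =
    (L (odd_branch n B N c d M) + L (even_branch n B N c d M))%E.
  by apply: measureU => //; exact: odd_even_branch_disjoint.
rewrite Lo Le -ge0_muleDl; last 2 first.
- by rewrite lee_fin mulr_ge0 //; case: ifP => _ //; apply: divr_ge0.
- by rewrite lee_fin mulr_ge0 //; case: ifP => _ //; apply: divr_ge0.
by rewrite -EFinD -mulrDr EFinM muleA.
Qed.

Lemma branches_odd_scale n B N c d M x :
  (odd_branch n B N c d M `|` even_branch n B N c d M) x -> odd_scale n x = M.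
Proof.
by rewrite /odd_branch /even_branch; case: asboolP => _; case: asboolP => _ [] [] // _ [_ ->].
Qed.

Lemma uniform_cylinder_succ n : uniform_cylinder n -> uniform_cylinder n.+1.
Proof.
move=> IH B N c d N0 c0 cd dN.
pose S := (\sum_(M <oo | M \in setT)
  ((branch_weight n B N M)%:E * L (cylinder n B M 0 M%:R^-1)))%E.
have measure_succ c' d' : 0 <= c' -> c' <= d' -> d' <= N%:R^-1 ->
    measurable (cylinder n.+1 B N c' d') /\
    L (cylinder n.+1 B N c' d') = ((d' - c')%:E * S)%E.
  move=> c0' cd' dN'; rewrite (@cylinder_succE n B N c' d' c0' dN').
  have hp M := @branches_measure n B N c' d' M IH c0' cd' dN'.
  split; first by apply: bigcup_measurable => M _; case: (hp M).
  rewrite measure_bigcup; last 2 first.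
  - by move=> M _; case: (hp M).
  - move=> i j _ _ [x [xi xj]].
    by rewrite -(branches_odd_scale xi) -(branches_odd_scale xj).
  apply: eq_trans (eq_eseriesr (fun M _ => proj2 (hp M))) _.
  apply: nneseriesZl => M _; apply: mule_ge0 => //.
  by rewrite lee_fin addr_ge0 //; case: ifP => _ //; apply: divr_ge0.
have N0r : (0 : R) < N%:R by rewrite ltr0n.
have [mP ->] := measure_succ c d c0 cd dN.
have Ni0 : (0 : R) <= N%:R^-1 by rewrite invr_ge0 ltW.
have [_ ->] := measure_succ 0 N%:R^-1 (lexx 0) Ni0 (lexx _).
split=> //; rewrite subr0 muleA -EFinM; congr (_ * _)%E; congr EFin.
by field; rewrite pnatr_eq0 -lt0n.
Qed.

Lemma uniform_cylinderP n : uniform_cylinder n.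
Proof. by elim: n => [|n]; [exact: uniform_cylinder0 | exact: uniform_cylinder_succ]. Qed.

Definition history_set n B : set R := @Irr R `&` [set x | history n B x].

Lemma cylinder_scale0 n B c d : cylinder n B 0 c d = set0.
Proof.
apply/seteqP; split=> x // [hx [_ eM _]].
by have [_ M0 _ _] := Torbit_odd_scale_inv n hx; rewrite eM in M0.
Qed.

Lemma scaled_orbit_bigcup n B a b : 0 <= a ->
  history_set n B `&` [set x | a < (odd_scale n x)%:R * Torbit n x < b] =
  \bigcup_M cylinder n B M (a / M%:R) (b / M%:R).
Proof.
move=> a0; apply/seteqP; split=> x.
  case=> -[hx hh] /andP [lo hi].
  have [_ M0 _ _] := Torbit_odd_scale_inv n hx.
  have M0r : (0 : R) < (odd_scale n x)%:R by rewrite ltr0n.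
  exists (odd_scale n x) => //; split=> //; split=> //.
  by rewrite ltr_pdivrMr // ltr_pdivlMr // ![Torbit n x * _]mulrC lo hi.
case=> M _ [hx [hh eM /andP [lo hi]]].
have [_ M0 _ _] := Torbit_odd_scale_inv n hx.
have M0r : (0 : R) < (odd_scale n x)%:R by rewrite ltr0n.
rewrite -eM ltr_pdivrMr // in lo; rewrite -eM ltr_pdivlMr // in hi.
by split=> //=; rewrite ![(odd_scale n x)%:R * _]mulrC lo hi.
Qed.

Lemma measure_scaled_orbit_series n B a b : 0 <= a -> a <= b -> b <= 1 ->
  measurable (history_set n B `&` [set x | a < (odd_scale n x)%:R * Torbit n x < b]) /\
  L (history_set n B `&` [set x | a < (odd_scale n x)%:R * Torbit n x < b]) =
  ((b - a)%:E * \sum_(M <oo | M \in setT) L (cylinder n B M 0 M%:R^-1))%E.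
Proof.
move=> a0 ab b1; rewrite scaled_orbit_bigcup //.
have hp M : measurable (cylinder n B M (a / M%:R) (b / M%:R)) /\
    L (cylinder n B M (a / M%:R) (b / M%:R)) =
    ((b - a)%:E * L (cylinder n B M 0 M%:R^-1))%E.
  case: (posnP M) => [-> | M0]; first by rewrite !cylinder_scale0 measure0 mule0.
  have M0r : (0 : R) < M%:R by rewrite ltr0n.
  have [||| mP ->] := @uniform_cylinderP n B M (a / M%:R) (b / M%:R) M0.
  - exact: divr_ge0.
  - by rewrite ler_pM2r ?invr_gt0.
  - by rewrite ler_pdivrMr // mulVf ?gt_eqF.
  split=> //; congr (_ * _)%E; congr EFin; rewrite -mulrBl; field.
  by rewrite gt_eqF.
split; first by apply: bigcup_measurable => M _; case: (hp M).
rewrite measure_bigcup; last 2 first.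
- by move=> M _; case: (hp M).
- by move=> i j _ _ [x [[_ [_ <- _]] [_ [_ <- _]]]].
apply: eq_trans (eq_eseriesr (fun M _ => proj2 (hp M))) _.
exact: nneseriesZl.
Qed.

Lemma history_set_scaled_orbit n B :
  history_set n B `&` [set x | 0 < (odd_scale n x)%:R * Torbit n x < 1] =
  history_set n B.
Proof.
apply/seteqP; split=> x; first by case.
move=> [hx hh]; split=> //=.
have [hy M0 lt_My _] := Torbit_odd_scale_inv n hx; have [y0 _ _] := IrrP hy.
by rewrite lt_My andbT mulr_gt0 // ltr0n.
Qed.

Lemma scaled_orbit_uniform n B a b : 0 <= a -> a <= b -> b <= 1 ->
  [/\ measurable (history_set n B),
      measurable (history_set n B `&` [set x | a < (odd_scale n x)%:R * Torbit n x < b])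
    & L (history_set n B `&` [set x | a < (odd_scale n x)%:R * Torbit n x < b]) =
      ((b - a)%:E * L (history_set n B))%E].
Proof.
move=> a0 ab b1.
have [mab ->] := @measure_scaled_orbit_series n B a b a0 ab b1.
have [m01 L01] := @measure_scaled_orbit_series n B 0 1 (lexx 0) ler01 (lexx 1).
rewrite history_set_scaled_orbit subr0 mul1e in m01 L01.
by rewrite L01.
Qed.

Lemma history_set_fin_num n B : L (history_set n B) \is a fin_num.
Proof.
have [mH _ _] := scaled_orbit_uniform n B (lexx 0) ler01 (lexx 1).
have [mI LI] := measure_Irr R.
rewrite ge0_fin_numE //; apply: (@le_lt_trans _ _ (L (@Irr R))).
  by apply: le_measure; rewrite ?inE // => x [].
by rewrite LI ltry.
Qed.

Lemma scaled_orbit_neq_inv n x (k : nat) : Irr x -> (0 < k)%N ->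
  (odd_scale n x)%:R * Torbit n x != k%:R^-1.
Proof.
move=> hx k0; have [hy M0 _ _] := Torbit_odd_scale_inv n hx; have [_ _ ny] := IrrP hy.
apply/eqP => e; apply: ny; exists ((odd_scale n x * k)%N%:Q^-1).
rewrite fmorphV rmorph_nat natrM invfM -e mulrA mulVf ?mul1r //.
by rewrite pnatr_eq0 -lt0n.
Qed.

Lemma Y_succ_geP n x (c : int) : Irr x -> odd `|c|%N -> 0 < c ->
  c <= Y n.+1 x <-> (odd_scale n x)%:R * Torbit n x < c%:~R^-1.
Proof.
move=> hx oc c0.
have [hy M0 _ _] := Torbit_odd_scale_inv n hx; have [y0 _ _] := IrrP hy.
have My0 : 0 < (odd_scale n x)%:R * Torbit n x by rewrite mulr_gt0 // ltr0n.
have /andP [Y_le lt_Y] := between2_odd_floor (((odd_scale n x)%:R * Torbit n x)^-1).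
rewrite -Y_succ_scaled // in Y_le lt_Y.
have c0r : (0 : R) < c%:~R by rewrite ltr0z.
split=> [c_le | lt_c].
  have le_c : (odd_scale n x)%:R * Torbit n x <= c%:~R^-1.
    by rewrite le_invr_mul1 // mulrC -le_invr_mul1 // (le_trans _ Y_le) ?ler_int.
  rewrite lt_neqAle le_c andbT.
  have -> : c = `|c|%N%:Z by rewrite gez0_abs // ltW.
  by rewrite -pmulrn scaled_orbit_neq_inv //; lia.
have : (c%:~R : R) < (Y n.+1 x + 2)%:~R.
  by rewrite intrD; apply: lt_trans lt_Y; rewrite lt_invr_mul1 // mulrC -lt_invr_mul1.
by rewrite ltr_int; have [oY _ _ _] := HY (ltn0Sn n) hx; lia.
Qed.

Lemma Y_succ_ge_natP n x (k : nat) : Irr x -> odd k -> (0 < k)%N ->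
  k%:Z <= Y n.+1 x <-> (odd_scale n x)%:R * Torbit n x < k%:R^-1.
Proof. by move=> hx ok k0; rewrite pmulrn; apply: Y_succ_geP; rewrite ?ltz_nat. Qed.

Lemma Y_succ_odd_nat n x : Irr x -> exists j : nat, Y n.+1 x = (2 * j + 1)%N%:Z.
Proof.
move=> hx; have [oY _ _ _] := HY (ltn0Sn n) hx.
have [_ _ lt_My _] := Torbit_odd_scale_inv n hx.
have : 1%N%:Z <= Y n.+1 x by apply/(Y_succ_ge_natP n hx) => //; rewrite invr1.
by exists (`|Y n.+1 x|%N %/ 2)%N; lia.
Qed.

Lemma Y_succ_eq_set n B (j : nat) :
  history_set n B `&` [set x | Y n.+1 x = (2 * j + 1)%N%:Z] =
  history_set n B `&` [set x | (2 * j + 3)%N%:R^-1 < (odd_scale n x)%:R * Torbit n x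
                                < (2 * j + 1)%N%:R^-1].
Proof.
have o1 : odd (2 * j + 1) by lia.
have o3 : odd (2 * j + 3) by lia.
have p1 : (0 < 2 * j + 1)%N by lia.
have p3 : (0 < 2 * j + 3)%N by lia.
apply/seteqP; split=> x [[hx hh] h]; split=> //=.
  have /(Y_succ_ge_natP n hx o1 p1) -> : (2 * j + 1)%N%:Z <= Y n.+1 x by rewrite h.
  rewrite andbT lt_neqAle eq_sym scaled_orbit_neq_inv //= leNgt.
  by apply/negP => /(Y_succ_ge_natP n hx o3 p3); rewrite h; lia.
have [oY _ _ _] := HY (ltn0Sn n) hx.
case/andP: h => lo /(Y_succ_ge_natP n hx o1 p1) Y_ge.
have : ~ (2 * j + 3)%N%:Z <= Y n.+1 x.
  by move/(Y_succ_ge_natP n hx o3 p3) => hi; move: (lt_trans hi lo); rewrite ltxx.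
lia.
Qed.

Definition odd_gap (j : nat) : R := (2 * j + 1)%N%:R^-1 - (2 * j + 3)%N%:R^-1.

Lemma odd_gap_ge0 j : 0 <= odd_gap j.
Proof. by rewrite subr_ge0 lef_pV2 ?posrE ?ltr0n ?ler_nat //; lia. Qed.

Definition odd_law (A : set int) : \bar R :=
  (\sum_(j <oo) (if `[< A (2 * j + 1)%N%:Z >] then odd_gap j else 0)%:E)%E.

Lemma measure_Y_succ_eq n B j :
  measurable (history_set n B `&` [set x | Y n.+1 x = (2 * j + 1)%N%:Z]) /\
  L (history_set n B `&` [set x | Y n.+1 x = (2 * j + 1)%N%:Z]) =
  ((odd_gap j)%:E * L (history_set n B))%E.
Proof.
rewrite Y_succ_eq_set.
have h3 : (0 : R) <= (2 * j + 3)%N%:R^-1 by rewrite invr_ge0 ler0n.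
have h31 : (2 * j + 3)%N%:R^-1 <= (2 * j + 1)%N%:R^-1 :> R.
  by rewrite lef_pV2 ?posrE ?ltr0n ?ler_nat //; lia.
have h1 : (2 * j + 1)%N%:R^-1 <= 1 :> R by rewrite invf_le1 ?ltr0n ?ler1n //; lia.
by have [_ mE ->] := scaled_orbit_uniform n B h3 h31 h1.
Qed.

Lemma measure_history_Y_succ n B A :
  measurable (history_set n B `&` [set x | A (Y n.+1 x)]) /\
  L (history_set n B `&` [set x | A (Y n.+1 x)]) = (odd_law A * L (history_set n B))%E.
Proof.
pose F j := if `[< A (2 * j + 1)%N%:Z >] then
  history_set n B `&` [set x | Y n.+1 x = (2 * j + 1)%N%:Z] else set0.
have -> : history_set n B `&` [set x | A (Y n.+1 x)] = \bigcup_j F j.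
  apply/seteqP; split=> x.
    case=> -[hx hh] hA; have [j ej] := Y_succ_odd_nat n hx.
    by exists j => //; rewrite /F asboolT -?ej.
  by case=> j _; rewrite /F; case: asboolP => // hA [hh /= ->].
have mF j : measurable (F j).
  by rewrite /F; case: asboolP => _ //; case: (measure_Y_succ_eq n B j).
split; first by apply: bigcup_measurable => j _.
rewrite (@measure_bigcup _ _ _ L setT F); last 2 first.
- by move=> j _; exact: mF.
- move=> i j _ _ [x []]; rewrite /F.
  case: asboolP => _ // [_ ei]; case: asboolP => _ // [_ ej].
  by move: ei ej => /= ->; lia.
have fin := history_set_fin_num n B.
have eLH : L (history_set n B) = (fine (L (history_set n B)))%:E by rewrite fineK.
have LF j : L (F j) = ((fine (L (history_set n B)))%:E *
    (if `[< A (2 * j + 1)%N%:Z >] then odd_gap j else 0)%:E)%E.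
  rewrite /F; case: asboolP => _; last by rewrite measure0 mule0.
  by rewrite (proj2 (measure_Y_succ_eq n B j)) muleC -eLH.
rewrite (eq_eseriesr (fun j _ => LF j)) nneseriesZl; last first.
  by move=> j _; case: ifP => _; rewrite lee_fin // odd_gap_ge0.
rewrite muleC -eLH; congr (_ * _)%E; rewrite /odd_law; congr (limn _).
by apply/funext => k; apply: eq_bigl => i; rewrite in_setT.
Qed.

Lemma history_set0 B : history_set 0 B = @Irr R.
Proof. by apply/seteqP; split=> x; [case | split=> // i; rewrite ltn0]. Qed.

Lemma history_setS n B :
  history_set n.+1 B = history_set n B `&` [set x | B n (Y n.+1 x)].
Proof.
apply/seteqP; split=> x.
  by case=> hx /history_succ [hh hB].
by case=> -[hx hh] hB; split=> //; apply/history_succ.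
Qed.

Lemma measure_history_set n B : L (history_set n B) = (\prod_(i < n) odd_law (B i))%E.
Proof.
elim: n => [|n IH]; first by rewrite history_set0 big_ord0; case: (measure_Irr R).
by rewrite history_setS (proj2 (measure_history_Y_succ n B (B n))) IH big_ord_recr /= muleC.
Qed.

Lemma history_setT n : history_set n (fun _ => setT) = @Irr R.
Proof. by apply/seteqP; split=> x; [case | split]. Qed.

Lemma measure_Y n A : measurable (@Irr R `&` Y n.+1 @^-1` A) /\
  L (@Irr R `&` Y n.+1 @^-1` A) = odd_law A.
Proof.
have [mA LA] := measure_history_Y_succ n (fun _ => setT) A.
rewrite history_setT in mA LA; rewrite LA; split=> //.
by have [_ ->] := measure_Irr R; rewrite mule1.
Qed.

Lemma measure_Y_ge n (c : int) : odd `|c|%N -> 0 < c ->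
  L (@Irr R `&` [set x | c <= Y n.+1 x]) = (c%:~R^-1)%:E.
Proof.
move=> oc c0.
have c1 : (1 : R) <= c%:~R by rewrite ler1z.
have ci0 : (0 : R) <= c%:~R^-1 by rewrite invr_ge0 (le_trans ler01).
have ci1 : c%:~R^-1 <= 1 :> R by rewrite invf_le1 // (lt_le_trans ltr01).
have [_ _] := scaled_orbit_uniform n (fun _ => setT) (lexx 0) ci0 ci1.
rewrite history_setT subr0; have [_ ->] := measure_Irr R; rewrite mule1 => <-.
congr L; apply/seteqP; split=> x [hx h]; split=> //=.
  have [hy M0 _ _] := Torbit_odd_scale_inv n hx; have [y0 _ _] := IrrP hy.
  by rewrite mulr_gt0 ?ltr0n //=; apply/(Y_succ_geP n hx oc c0).
by case/andP: h => _ h; apply/(Y_succ_geP n hx oc c0).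
Qed.

Lemma measure_Y_ge_odd n (k : nat) : (1 <= k)%N ->
  L (@Irr R `&` [set x | 2 * k%:Z - 1 <= Y n.+1 x]) = ((2 * k%:R - 1)^-1)%:E.
Proof.
by move=> k1; rewrite measure_Y_ge; [rewrite intrB intrM -pmulrn | lia | lia].
Qed.

Lemma measure_Y_ge_bounds n (t : R) : 0 < t ->
  (((t + 2)^-1)%:E < L (@Irr R `&` [set x | (t <= (Y n.+1 x)%:~R)%R]))%E /\
  (L (@Irr R `&` [set x | (t <= (Y n.+1 x)%:~R)%R]) <= (t^-1)%:E)%E.
Proof.
move=> t0; have /andP [lo hi] := between2_odd_floor (- t).
have oc : odd `|(- odd_floor (- t))%R|%N by rewrite abszN odd_floor_odd.
set c := - odd_floor (- t) in oc.
have tc : t <= c%:~R by rewrite intrN lerNr.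
have ct : c%:~R < t + 2 by rewrite intrN ltrNl opprD; lra.
have c0 : 0 < c by rewrite -(ltr0z R) (lt_le_trans t0 tc).
have -> : @Irr R `&` [set x | t <= (Y n.+1 x)%:~R] = @Irr R `&` [set x | c <= Y n.+1 x].
  apply/seteqP; split=> x [hx h]; split=> //=; last by rewrite (le_trans tc) ?ler_int.
  have [oY _ _ _] := HY (ltn0Sn n) hx.
  have : ((c - 2)%:~R : R) < (Y n.+1 x)%:~R by apply: lt_le_trans h; rewrite intrB; lra.
  by rewrite ltr_int; lia.
have c0r : (0 : R) < c%:~R by rewrite ltr0z.
rewrite measure_Y_ge // !lte_fin !lee_fin ltf_pV2 ?posrE ?addr_gt0 //.
by rewrite lef_pV2 ?posrE.
Qed.

Lemma odd_lawT : odd_law setT = 1%E.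
Proof.
have [_ <-] := measure_Y 0 setT.
by rewrite preimage_setT setIT; case: (measure_Irr R).
Qed.

Lemma Y_iid : iid_Irr Y.
Proof.
split.
- by case=> // n A _; case: (measure_Y n A).
- by case=> // n [|m] // A _ _; rewrite (proj2 (measure_Y n A)) (proj2 (measure_Y m A)).
move=> s A us s_pos.
pose N := (\max_(i <- s) i)%N.
have le_N i : i \in s -> (i <= N)%N by move=> si; exact: leq_bigmax_seq.
pose B i := if i.+1 \in s then A i.+1 else setT.
have -> : @Irr R `&` \bigcap_(i in [set` s]) Y i @^-1` A i = history_set N B.
  apply/seteqP; split=> x [hx h]; split=> //.
    by move=> i iN; rewrite /B; case: ifP => // si; exact: h.
  move=> i si; have := allP s_pos i si; case: i si => // i si _.
  by have := h i; rewrite /B si; apply; rewrite le_N.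
rewrite measure_history_set.
rewrite (eq_bigr (fun i : 'I_N => if i.+1 \in s then odd_law (A i.+1) else 1%E)); last first.
  by move=> i _; rewrite /B; case: ifP => // _; exact: odd_lawT.
rewrite (@big_ord_mem_succ _ _ _ s N (fun i => odd_law (A i)) us s_pos le_N).
rewrite big_seq [RHS]big_seq; apply: eq_bigr => i si.
by case: i si (allP s_pos i si) => // i _ _; rewrite (proj2 (measure_Y i (A i.+1))).
Qed.

End DigitProcess.

Unset Implicit Arguments.

Theorem lemma3p7 (R : realType) (Y : nat -> R -> int) :
  Yhyp Y ->
  [/\ (forall n k : nat, (1 <= n)%N -> (1 <= k)%N ->
         lebesgue_measure (@Irr R `&` [set x | 2 * k%:Z - 1 <= Y n x])
         = ((2 * k%:R - 1)^-1)%:E),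
      (forall (n : nat) (t : R), (1 <= n)%N -> 0 < t ->
         (((t + 2)^-1)%:E <
           lebesgue_measure (@Irr R `&` [set x | (t <= (Y n x)%:~R)%R]))%E /\
         (lebesgue_measure (@Irr R `&` [set x | (t <= (Y n x)%:~R)%R])
           <= (t^-1)%:E)%E)
    & iid_Irr Y].
Proof.
move=> HY; split.
- by case=> // n k _; exact: measure_Y_ge_odd.
- by case=> // n t _; exact: measure_Y_ge_bounds.
- exact: Y_iid.
Qed.
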